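(* Let $f$ be a subluminal rotational wave. Then $\sigma(\mathrm{P})$ is contained in the imaginary axis.
   Context: A traveling wave of speed $c$ ($c^2\neq1$) of $u_{tt}-u_{xx}+\sin u=0$ is a real solution $f$ of $(c^2-1)f''+\sin f=0$, with energy $E$ given by $\tfrac12(c^2-1)(f')^2+1-\cos f=E$. It is subluminal rotational if $c^2<1$ and $E<0$. Let $\gamma=1/(c^2-1)$. $\sigma(\mathrm{P})$ is the set of $\lambda\in\mathbb{C}$ for which $p''-2c\gamma\lambda p'+\gamma(\lambda^2+\cos f(z))p=0$ has a nontrivial solution bounded on $\mathbb{R}$. *)

From Stdlib Require Import Reals.
From Coquelicot Require Import Coquelicot.
Open Scope R_scope.

(* f is a traveling wave of speed c of u_tt - u_xx + sin u = 0:
   a real C^2 solution of (c^2-1) f'' + sin f = 0 on all of R,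
   with f' = df and f'' = d2f. *)
Definition traveling_wave (c : R) (f df d2f : R -> R) : Prop :=
  c ^ 2 <> 1 /\
  (forall z, is_derive f z (df z)) /\
  (forall z, is_derive df z (d2f z)) /\
  (forall z, (c ^ 2 - 1) * d2f z + sin (f z) = 0).

Definition wave_energy (c : R) (f df : R -> R) (E : R) : Prop :=
  forall z, / 2 * (c ^ 2 - 1) * (df z) ^ 2 + 1 - cos (f z) = E.

Definition subluminal_rotational (c : R) (f df d2f : R -> R) : Prop :=
  traveling_wave c f df d2f /\ c ^ 2 < 1 /\
  exists E, wave_energy c f df E /\ E < 0.

Definition gamma (c : R) : R := / (c ^ 2 - 1).

Definition in_spectrum_P (c : R) (f : R -> R) (lam : C) : Prop :=
  exists p dp d2p : R -> C,
    (forall z, is_derive p z (dp z)) /\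
    (forall z, is_derive dp z (d2p z)) /\
    (forall z, (d2p z - RtoC (2 * c * gamma c) * lam * dp z
                 + RtoC (gamma c) * (lam * lam + RtoC (cos (f z))) * p z)%C = 0%C) /\
    (exists z0, p z0 <> 0%C) /\
    (exists M, forall z, Cmod (p z) <= M).

From Stdlib Require Import Reals Lra.
From Coquelicot Require Import Coquelicot.
Open Scope R_scope.

(* Write m = 1 - c^2 > 0 and λ = a + i b.  Since E < 0, f' never vanishes, so
   r = f''/f' is a global solution of the Riccati equation m (r' + r^2) = cos f
   (f' solves the linearised equation m y'' = cos f y).  For a solution p of the
   spectral equation put V = p' - r p; the quantity
     ψ = m Re(conj λ V conj p) + c |λ|^2 |p|^2
   then satisfies ψ' = a (|λ|^2 |p|^2 + m |V|^2), while |ψ|^2 is bounded by a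
   multiple of |p|^2 times that derivative.  If p is bounded and a ≠ 0, the
   function ψ/a is nondecreasing with (ψ/a)' >= (ψ/a)^2 / K: unless it vanishes
   identically it blows up in finite time in one direction.  Hence ψ' = 0 and
   p = 0. *)

Lemma is_derive_Re (p : R -> C) (z : R) (l : C) :
  is_derive p z l -> is_derive (fun t => Re (p t)) z (Re l).
Proof.
  intros H. eapply filterdiff_ext_lin.
  - apply (filterdiff_comp' p fst); [exact H | apply filterdiff_linear, is_linear_fst].
  - reflexivity.
Qed.

Lemma is_derive_Im (p : R -> C) (z : R) (l : C) :
  is_derive p z l -> is_derive (fun t => Im (p t)) z (Im l).
Proof.
  intros H. eapply filterdiff_ext_lin.
  - apply (filterdiff_comp' p snd); [exact H | apply filterdiff_linear, is_linear_snd].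
  - reflexivity.
Qed.

Lemma Cmod_le_Re_Im_sqr (x : C) (M : R) :
  Cmod x <= M -> Re x ^ 2 + Im x ^ 2 <= M ^ 2.
Proof.
  intros H. change (sqrt (Re x ^ 2 + Im x ^ 2) <= M) in H.
  assert (Hnn : 0 <= Re x ^ 2 + Im x ^ 2)
    by (pose proof (pow2_ge_0 (Re x)); pose proof (pow2_ge_0 (Im x)); lra).
  pose proof (sqrt_pos (Re x ^ 2 + Im x ^ 2)).
  rewrite <- (sqrt_sqrt _ Hnn). nra.
Qed.

Lemma is_derive_log_derive (y dy : R -> R) (d2y z : R) :
  y z <> 0 -> is_derive y z (dy z) -> is_derive dy z d2y ->
  is_derive (fun t => dy t / y t) z (d2y / y z - (dy z / y z) ^ 2).
Proof.
  intros Hy H1 H2.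
  replace (d2y / y z - (dy z / y z) ^ 2) with ((d2y * y z - dy z * dy z) / y z ^ 2)
    by (field; exact Hy).
  now apply is_derive_div.
Qed.

Lemma mvt_le (g dg : R -> R) (a b k : R) : a <= b ->
  (forall x, a <= x <= b -> is_derive g x (dg x)) ->
  (forall x, a <= x <= b -> k <= dg x) -> k * (b - a) <= g b - g a.
Proof.
  intros Hab Hd Hk.
  destruct (MVT_gen g a b dg) as [x [Hx ->]];
    rewrite ?Rmin_left, ?Rmax_right in * by lra.
  - intros x Hx. apply Hd. lra.
  - intros x Hx. apply continuity_pt_filterlim, (ex_derive_continuous g).
    eexists. now apply Hd.
  - specialize (Hk x Hx). nra.
Qed.

(* A differential inequality g' >= g^2 / K forces blow-up of any positive value
   in finite forward time, since (-1/g)' >= 1/K. *)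
Lemma derive_ge_sqr_nonpos (g dg : R -> R) (K : R) : 0 < K ->
  (forall z, is_derive g z (dg z)) -> (forall z, g z ^ 2 <= K * dg z) ->
  forall y, g y <= 0.
Proof.
  intros HK Hg Hsq y. apply Rnot_lt_le. intros Hy.
  assert (Hdg : forall z, 0 <= dg z) by (intros z; specialize (Hsq z); nra).
  assert (Hpos : forall z, y <= z -> 0 < g z).
  { intros z Hz. pose proof (mvt_le g dg y z 0 Hz (fun x _ => Hg x) (fun x _ => Hdg x)). lra. }
  assert (Hclimb : / K * (y + K / g y - y) <= - / g (y + K / g y) - - / g y).
  { apply (mvt_le (fun t => - / g t) (fun t => dg t / g t ^ 2)).
    - assert (0 < K / g y) by (apply Rdiv_lt_0_compat; lra). lra.
    - intros x Hx. specialize (Hpos x ltac:(lra)).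
      replace (dg x / g x ^ 2) with (- (- dg x / g x ^ 2)) by (field; lra).
      apply (is_derive_opp (fun t => / g t)), is_derive_inv; [apply Hg | lra].
    - intros x Hx. specialize (Hpos x ltac:(lra)). specialize (Hsq x).
      apply (Rmult_le_reg_r (K * g x ^ 2)); [apply Rmult_lt_0_compat; [lra | now apply pow_lt] |].
      replace (/ K * (K * g x ^ 2)) with (g x ^ 2) by (field; lra).
      replace (dg x / g x ^ 2 * (K * g x ^ 2)) with (K * dg x) by (field; lra). exact Hsq. }
  replace (/ K * (y + K / g y - y)) with (/ g y) in Hclimb by (field; lra).
  assert (0 < / g (y + K / g y)).
  { apply Rinv_0_lt_compat, Hpos. assert (0 < K / g y) by (apply Rdiv_lt_0_compat; lra). lra. }
  lra.
Qed.

Lemma derive_ge_sqr_eq0 (g dg : R -> R) (K : R) : 0 < K ->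
  (forall z, is_derive g z (dg z)) -> (forall z, g z ^ 2 <= K * dg z) ->
  forall y, g y = 0.
Proof.
  intros HK Hg Hsq y.
  assert (Hle := derive_ge_sqr_nonpos g dg K HK Hg Hsq y).
  assert (Hge : - g (- - y) <= 0).
  { apply (derive_ge_sqr_nonpos (fun z => - g (- z)) (fun z => dg (- z)) K HK).
    - intros z. replace (dg (- z)) with (- (-1 * dg (- z))) by ring.
      apply (is_derive_opp (fun z => g (- z))), (is_derive_comp g (fun z => - z)).
      + apply Hg.
      + auto_derive; auto; ring.
    - intros z. replace ((- g (- z)) ^ 2) with (g (- z) ^ 2) by ring. apply Hsq. }
  rewrite Ropp_involutive in Hge. lra.
Qed.

(* ψ of the header, for λ = a + i b, p = P1 + i P2 and V = V1 + i V2. *)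
Definition flux (m a b c P1 P2 V1 V2 : R) : R :=
  m * (a * (V1 * P1 + V2 * P2) + b * (V2 * P1 - V1 * P2)) + c * (a ^ 2 + b ^ 2) * (P1 ^ 2 + P2 ^ 2).

Definition dissipation (m a b P1 P2 V1 V2 : R) : R :=
  (a ^ 2 + b ^ 2) * (P1 ^ 2 + P2 ^ 2) + m * (V1 ^ 2 + V2 ^ 2).

Lemma dissipation_ge0 (m a b P1 P2 V1 V2 : R) : 0 <= m -> 0 <= dissipation m a b P1 P2 V1 V2.
Proof.
  intros Hm. unfold dissipation.
  assert (0 <= V1 ^ 2 + V2 ^ 2) by nra. assert (0 <= (a ^ 2 + b ^ 2) * (P1 ^ 2 + P2 ^ 2)) by nra.
  nra.
Qed.

Lemma flux_sqr_le (m a b c P1 P2 V1 V2 : R) : 0 <= m <= 1 -> c ^ 2 <= 1 ->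
  flux m a b c P1 P2 V1 V2 ^ 2
  <= 2 * (a ^ 2 + b ^ 2) * (P1 ^ 2 + P2 ^ 2) * dissipation m a b P1 P2 V1 V2.
Proof.
  intros Hm Hc. unfold flux, dissipation.
  set (u := a * (V1 * P1 + V2 * P2) + b * (V2 * P1 - V1 * P2)).
  set (L := a ^ 2 + b ^ 2). set (N := P1 ^ 2 + P2 ^ 2). set (W := V1 ^ 2 + V2 ^ 2).
  assert (HL : 0 <= L) by (unfold L; nra).
  assert (HN : 0 <= N) by (unfold N; nra).
  assert (HW : 0 <= W) by (unfold W; nra).
  (* Lagrange's identity: |conj λ V conj p|^2 = |λ|^2 |V|^2 |p|^2 *)
  assert (Hu : u ^ 2 <= L * N * W).
  { replace (L * N * W) with (u ^ 2 + (a * (V2 * P1 - V1 * P2) - b * (V1 * P1 + V2 * P2)) ^ 2)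
      by (unfold u, L, N, W; ring).
    pose proof (pow2_ge_0 (a * (V2 * P1 - V1 * P2) - b * (V1 * P1 + V2 * P2))). lra. }
  assert (Hmu : (m * u) ^ 2 <= m * (L * N * W)).
  { assert (m * u ^ 2 <= u ^ 2) by nra. nra. }
  assert (HcLN : (c * L * N) ^ 2 <= (L * N) ^ 2) by (assert (0 <= (L * N) ^ 2) by nra; nra).
  pose proof (pow2_ge_0 (m * u - c * L * N)).
  nra.
Qed.

Lemma scaled_flux_sqr_le (m a b c M P1 P2 V1 V2 : R) :
  a <> 0 -> 0 <= m <= 1 -> c ^ 2 <= 1 -> P1 ^ 2 + P2 ^ 2 <= M ^ 2 ->
  (/ a * flux m a b c P1 P2 V1 V2) ^ 2
  <= (2 * (a ^ 2 + b ^ 2) * M ^ 2 / a ^ 2 + 1) * dissipation m a b P1 P2 V1 V2.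
Proof.
  intros Ha Hm Hc HN.
  pose proof (flux_sqr_le m a b c P1 P2 V1 V2 Hm Hc) as HF.
  pose proof (dissipation_ge0 m a b P1 P2 V1 V2 (proj1 Hm)) as HT.
  set (F := flux m a b c P1 P2 V1 V2) in *. set (T := dissipation m a b P1 P2 V1 V2) in *.
  assert (Ha2 : 0 < a ^ 2) by now apply pow2_gt_0.
  assert (HL : 0 <= a ^ 2 + b ^ 2) by (pose proof (pow2_ge_0 b); lra).
  apply (Rmult_le_reg_r (a ^ 2)); [exact Ha2 |].
  replace ((/ a * F) ^ 2 * a ^ 2) with (F ^ 2) by (field; exact Ha).
  replace ((2 * (a ^ 2 + b ^ 2) * M ^ 2 / a ^ 2 + 1) * T * a ^ 2)
    with (2 * (a ^ 2 + b ^ 2) * M ^ 2 * T + a ^ 2 * T) by (field; lra).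
  assert (0 <= (a ^ 2 + b ^ 2) * (M ^ 2 - (P1 ^ 2 + P2 ^ 2)) * T)
    by (apply Rmult_le_pos; [apply Rmult_le_pos |]; lra).
  assert (0 <= a ^ 2 * T) by (apply Rmult_le_pos; lra).
  lra.
Qed.

Lemma is_derive_flux (P1 P2 Q1 Q2 r : R -> R) (S1 S2 q a b c m z : R) :
  m <> 0 ->
  is_derive P1 z (Q1 z) -> is_derive P2 z (Q2 z) -> is_derive Q1 z S1 -> is_derive Q2 z S2 ->
  is_derive r z (q / m - r z ^ 2) ->
  m * S1 + 2 * c * (a * Q1 z - b * Q2 z) = (a ^ 2 - b ^ 2 + q) * P1 z - 2 * a * b * P2 z ->
  m * S2 + 2 * c * (a * Q2 z + b * Q1 z) = (a ^ 2 - b ^ 2 + q) * P2 z + 2 * a * b * P1 z ->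
  is_derive (fun t => flux m a b c (P1 t) (P2 t) (Q1 t - r t * P1 t) (Q2 t - r t * P2 t)) z
    (a * dissipation m a b (P1 z) (P2 z) (Q1 z - r z * P1 z) (Q2 z - r z * P2 z)).
Proof.
  intros Hm HP1 HP2 HQ1 HQ2 Hr E1 E2. unfold flux, dissipation.
  auto_derive.
  - repeat split; eexists; eassumption.
  - replace (Derive (fun x => P1 x) z) with (Q1 z) by (symmetry; now apply is_derive_unique).
    replace (Derive (fun x => P2 x) z) with (Q2 z) by (symmetry; now apply is_derive_unique).
    replace (Derive (fun x => Q1 x) z) with S1 by (symmetry; now apply is_derive_unique).
    replace (Derive (fun x => Q2 x) z) with S2 by (symmetry; now apply is_derive_unique).
    replace (Derive (fun x => r x) z) with (q / m - r z ^ 2)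
      by (symmetry; now apply is_derive_unique).
    replace S1 with (((a ^ 2 - b ^ 2 + q) * P1 z - 2 * a * b * P2 z
                      - 2 * c * (a * Q1 z - b * Q2 z)) / m)
      by (field_simplify_eq; [lra | exact Hm]).
    replace S2 with (((a ^ 2 - b ^ 2 + q) * P2 z + 2 * a * b * P1 z
                      - 2 * c * (a * Q2 z + b * Q1 z)) / m)
      by (field_simplify_eq; [lra | exact Hm]).
    field. exact Hm.
Qed.

Section BoundedSolutions.

Variables (m a b c M : R) (q r P1 P2 Q1 Q2 S1 S2 : R -> R).

Hypotheses (Hm : 0 < m <= 1) (Hc : c ^ 2 <= 1) (Ha : a <> 0).
Hypotheses (HP1 : forall z, is_derive P1 z (Q1 z)) (HP2 : forall z, is_derive P2 z (Q2 z))
  (HQ1 : forall z, is_derive Q1 z (S1 z)) (HQ2 : forall z, is_derive Q2 z (S2 z)).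
Hypothesis (Hriccati : forall z, is_derive r z (q z / m - r z ^ 2)).
(* Real and imaginary parts of m p'' + 2 c λ p' = (λ^2 + q) p. *)
Hypotheses
  (HS1 : forall z, m * S1 z + 2 * c * (a * Q1 z - b * Q2 z)
                   = (a ^ 2 - b ^ 2 + q z) * P1 z - 2 * a * b * P2 z)
  (HS2 : forall z, m * S2 z + 2 * c * (a * Q2 z + b * Q1 z)
                   = (a ^ 2 - b ^ 2 + q z) * P2 z + 2 * a * b * P1 z).
Hypothesis (Hbound : forall z, P1 z ^ 2 + P2 z ^ 2 <= M ^ 2).

Lemma bounded_solution_eq0 (z : R) : P1 z = 0 /\ P2 z = 0.
Proof.
  set (V1 := fun t => Q1 t - r t * P1 t). set (V2 := fun t => Q2 t - r t * P2 t).
  set (g := fun t => / a * flux m a b c (P1 t) (P2 t) (V1 t) (V2 t)).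
  set (T := fun t => dissipation m a b (P1 t) (P2 t) (V1 t) (V2 t)).
  assert (Hg : forall t, is_derive g t (T t)).
  { intros t. replace (T t) with (/ a * (a * T t)) by (field; exact Ha).
    apply (is_derive_scal (fun t => flux m a b c (P1 t) (P2 t) (V1 t) (V2 t))).
    apply (is_derive_flux P1 P2 Q1 Q2 r (S1 t) (S2 t) (q t)); auto; lra. }
  set (K := 2 * (a ^ 2 + b ^ 2) * M ^ 2 / a ^ 2 + 1).
  assert (HK : 0 < K).
  { assert (0 <= 2 * (a ^ 2 + b ^ 2) * M ^ 2 / a ^ 2); [| unfold K; lra].
    apply Rdiv_le_0_compat; [| now apply pow2_gt_0].
    pose proof (pow2_ge_0 a); pose proof (pow2_ge_0 b); pose proof (pow2_ge_0 M). nra. }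
  assert (Hsq : forall t, g t ^ 2 <= K * T t)
    by (intros t; apply scaled_flux_sqr_le; auto; lra).
  assert (HT0 : T z = 0).
  { assert (Hconst : is_derive (fun _ => 0) z (T z)).
    { apply (is_derive_ext g); [| apply Hg].
      intros t. exact (derive_ge_sqr_eq0 g T K HK Hg Hsq t). }
    apply is_derive_unique in Hconst. rewrite Derive_const in Hconst. now symmetry. }
  unfold T, dissipation in HT0.
  assert (0 < a ^ 2 + b ^ 2) by (pose proof (pow2_gt_0 a Ha); pose proof (pow2_ge_0 b); lra).
  pose proof (pow2_ge_0 (P1 z)). pose proof (pow2_ge_0 (P2 z)).
  assert (0 <= m * (V1 z ^ 2 + V2 z ^ 2))
    by (pose proof (pow2_ge_0 (V1 z)); pose proof (pow2_ge_0 (V2 z)); apply Rmult_le_pos; lra).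
  assert (HN : P1 z ^ 2 + P2 z ^ 2 = 0) by nra.
  split; nra.
Qed.

End BoundedSolutions.

Lemma subluminal_rotational_df_neq0 (c : R) (f df d2f : R -> R) :
  subluminal_rotational c f df d2f -> forall z, df z <> 0.
Proof.
  intros [_ [_ [E [HE HEneg]]]] z Hz.
  specialize (HE z). rewrite Hz in HE. pose proof (COS_bound (f z)). lra.
Qed.

Lemma traveling_wave_is_derive_d2f (c : R) (f df d2f : R -> R) :
  traveling_wave c f df d2f -> forall z, is_derive d2f z (cos (f z) * df z / (1 - c ^ 2)).
Proof.
  intros [Hc [Hf [_ Hode]]] z.
  assert (Hm : 1 - c ^ 2 <> 0) by lra.
  apply (is_derive_ext (fun t => sin (f t) / (1 - c ^ 2))).
  - intros t. specialize (Hode t). change (sin (f t) / (1 - c ^ 2) = d2f t :> R).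
    replace (sin (f t)) with ((1 - c ^ 2) * d2f t) by lra. field. exact Hm.
  - auto_derive; [eexists; apply Hf |].
    replace (Derive (fun x => f x) z) with (df z) by (symmetry; now apply is_derive_unique).
    field. exact Hm.
Qed.

Lemma traveling_wave_log_derive (c : R) (f df d2f : R -> R) (z : R) :
  traveling_wave c f df d2f -> df z <> 0 ->
  is_derive (fun t => d2f t / df t) z (cos (f z) / (1 - c ^ 2) - (d2f z / df z) ^ 2).
Proof.
  intros Hw Hz. assert (Hm : 1 - c ^ 2 <> 0) by (destruct Hw; lra).
  replace (cos (f z) / (1 - c ^ 2)) with (cos (f z) * df z / (1 - c ^ 2) / df z)
    by (field; split; assumption).
  apply is_derive_log_derive; [exact Hz | apply Hw | now apply traveling_wave_is_derive_d2f].
Qed.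

Lemma spectral_eq_components (c q : R) (lam P V S : C) : c ^ 2 <> 1 ->
  (S - RtoC (2 * c * gamma c) * lam * V + RtoC (gamma c) * (lam * lam + RtoC q) * P)%C = 0%C ->
  (1 - c ^ 2) * Re S + 2 * c * (Re lam * Re V - Im lam * Im V)
    = (Re lam ^ 2 - Im lam ^ 2 + q) * Re P - 2 * Re lam * Im lam * Im P /\
  (1 - c ^ 2) * Im S + 2 * c * (Re lam * Im V + Im lam * Re V)
    = (Re lam ^ 2 - Im lam ^ 2 + q) * Im P + 2 * Re lam * Im lam * Re P.
Proof.
  intros Hc H. assert (Hm : c ^ 2 - 1 <> 0) by lra.
  split; apply Rminus_diag_uniq.
  - replace 0 with ((1 - c ^ 2) * Re 0%C) by (simpl; ring). rewrite <- H.
    destruct lam, P, V, S. unfold gamma. cbn -[pow]. field. exact Hm.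
  - replace 0 with ((1 - c ^ 2) * Im 0%C) by (simpl; ring). rewrite <- H.
    destruct lam, P, V, S. unfold gamma. cbn -[pow]. field. exact Hm.
Qed.

Theorem lemma4p1 (c : R) (f df d2f : R -> R) :
  subluminal_rotational c f df d2f ->
  forall lam : C, in_spectrum_P c f lam -> Re lam = 0.
Proof.
  intros Hsub lam [p [dp [d2p [Hp [Hdp [Heq [[z0 Hz0] [M HM]]]]]]]].
  pose proof (subluminal_rotational_df_neq0 c f df d2f Hsub) as Hdf.
  destruct Hsub as [Hw [Hc _]].
  assert (Hc2 : c ^ 2 <> 1) by lra.
  destruct (Req_dec (Re lam) 0) as [Ha | Ha]; [exact Ha | exfalso].
  assert (Hm : 0 < 1 - c ^ 2 <= 1) by (pose proof (pow2_ge_0 c); lra).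
  pose proof (fun z => spectral_eq_components c (cos (f z)) lam (p z) (dp z) (d2p z) Hc2 (Heq z))
    as HS.
  destruct (bounded_solution_eq0 (1 - c ^ 2) (Re lam) (Im lam) c M _ _ _ _ _ _ _ _
    Hm (Rlt_le _ _ Hc) Ha
    (fun z => is_derive_Re p z _ (Hp z)) (fun z => is_derive_Im p z _ (Hp z))
    (fun z => is_derive_Re dp z _ (Hdp z)) (fun z => is_derive_Im dp z _ (Hdp z))
    (fun z => traveling_wave_log_derive c f df d2f z Hw (Hdf z))
    (fun z => proj1 (HS z)) (fun z => proj2 (HS z))
    (fun z => Cmod_le_Re_Im_sqr _ _ (HM z)) z0) as [HRe HIm].
  apply Hz0, injective_projections; assumption.
Qed.
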